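(* Let $m\ge1$. Every word $w$ over $\{a,b\}$ admits a factorization $w=w_1w_2w_3$ with $w_1\in L^{\epsilon}_{\vdash_{\{ba^m,a\}}}$, $w_2\in L^{\epsilon}_{\vdash_{\{ba^m,b\}}}$ and $|w_3|_a<m$, such that moreover, whenever $w$ belongs to the shuffle of $x$ copies of $ba^m$ and some word $w'$, one has $x\le |w_1|_b+|w_2|_a/m$.
   Context: For words $u,v$, the shuffle $u \sqcup\!\sqcup v$ is the set of all words $u_1v_1\cdots u_kv_k$ with $k\ge 1$, $u=u_1\cdots u_k$, $v=v_1\cdots v_k$ (pieces possibly empty); shuffles of several words are defined iteratively. For a finite set $I$ of words, $v \vdash_I w$ means $w \in v \sqcup\!\sqcup u$ for some $u\in I$; $\vdash_I^*$ is its reflexive-transitive closure and $L^{\epsilon}_{\vdash_I}=\{w : \epsilon \vdash_I^* w\}$. *)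

From mathcomp Require Import all_boot all_order all_algebra.
Set Implicit Arguments. Unset Strict Implicit. Unset Printing Implicit Defensive.

(* Alphabet {a,b} encoded as bool: a = true, b = false. *)
Definition la : bool := true.
Definition lb : bool := false.
Definition word := seq bool.

Definition occ (c : bool) (w : word) : nat := count_mem c w.

Definition shuffle (u v w : word) : Prop :=
  exists ps : seq (word * word),
    [/\ ps != [::],
        u = flatten (map fst ps),
        v = flatten (map snd ps) &
        w = flatten (map (fun p => p.1 ++ p.2) ps)].

(* Iterated shuffle: shuffles [:: u1; ...; un] w  <->  w ∈ (..(u1 ⧢ u2) ⧢ ..) ⧢ un,
   with the empty family giving {ε}. *)
Definition shuffles (ws : seq word) (w : word) : Prop :=
  foldl (fun (P : word -> Prop) u => fun w => exists z, P z /\ shuffle z u w)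
        (fun w => w = [::]) ws w.

Definition derives (I : seq word) (v w : word) : Prop :=
  exists2 u, u \in I & shuffle v u w.

Inductive Leps (I : seq word) : word -> Prop :=
| Leps_nil : Leps I [::]
| Leps_step v w : Leps I v -> derives I v w -> Leps I w.

Definition ba (m : nat) : word := lb :: nseq m la.

From mathcomp Require Import all_boot all_order all_algebra.
From mathcomp Require Import zify.
Import GRing.Theory Num.Theory.
Set Implicit Arguments. Unset Strict Implicit.

(* In any shuffle of x copies of b a^m with another word, cutting the word
   into u v puts the b of each copy in u or all m of its a's in v, so
   x m <= m |u|_b + |v|_a.  The factorization is built greedily, letter by
   letter, keeping w2 w3 solvent: every a is covered by an earlier b of w2 w3,
   one b covering m a's; w3 holds the fewer than m a's that do not yet complete
   a copy of b a^m, so m divides |w2|_a.  As soon as an a cannot be covered,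
   everything read so far becomes w1, in which every a is covered by an earlier
   b or is a free generator.  Cutting after w1 then gives
   x m <= m |w1|_b + |w2|_a + |w3|_a < m (|w1|_b + |w2|_a / m + 1). *)

Inductive interleaving : word -> word -> word -> Prop :=
| interleave_nil : interleaving [::] [::] [::]
| interleave_left c z u w :
    interleaving z u w -> interleaving (c :: z) u (c :: w)
| interleave_right c z u w :
    interleaving z u w -> interleaving z (c :: u) (c :: w).

Lemma interleaving_catl p q : interleaving p q (p ++ q).
Proof.
elim: p => [|c p IH] /=; last by constructor.
by elim: q => [|c q IH]; constructor.
Qed.

Lemma interleaving_cat z u w z' u' w' :
  interleaving z u w -> interleaving z' u' w' ->
  interleaving (z ++ z') (u ++ u') (w ++ w').
Proof. by move=> H H'; elim: H => {z u w} //= c z u w _ IH; constructor. Qed.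

Lemma shuffleP z u w : shuffle z u w <-> interleaving z u w.
Proof.
split.
  case=> ps [_ -> -> ->]; elim: ps => [|[p q] ps IH] /=; first by constructor.
  exact: interleaving_cat (interleaving_catl p q) IH.
elim=> {z u w} [|c z u w _ [ps [ps0 -> -> ->]]|c z u w _ [ps [ps0 -> -> ->]]].
- by exists [:: ([::], [::])].
- by exists (([:: c], [::]) :: ps).
- by exists (([::], [:: c]) :: ps).
Qed.

Lemma count_interleaving c z u w :
  interleaving z u w -> count_mem c w = count_mem c z + count_mem c u.
Proof. by elim=> {z u w} //= d z u w _ ->; lia. Qed.

Lemma interleaving_cut z u w n : interleaving z u w ->
  exists nz nu, interleaving (take nz z) (take nu u) (take n w) /\
                interleaving (drop nz z) (drop nu u) (drop n w).
Proof.
move=> H; elim: H n => {z u w} [|c z u w H IH|c z u w H IH] [|n].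
- by exists 0, 0; split; constructor.
- by exists 0, 0; split; constructor.
- by exists 0, 0; rewrite !take0 !drop0; split; constructor.
- have [nz [nu [Ht Hd]]] := IH n.
  by exists nz.+1, nu; split => //; constructor.
- by exists 0, 0; rewrite !take0 !drop0; split; constructor.
- have [nz [nu [Ht Hd]]] := IH n.
  by exists nz, nu.+1; split => //; constructor.
Qed.

Lemma shuffles_rcons us u w :
  shuffles (rcons us u) w <-> exists z, shuffles us z /\ shuffle z u w.
Proof. by rewrite /shuffles foldl_rcons. Qed.

Lemma Leps_insert I g p q :
  g \in I -> Leps I (p ++ q) -> Leps I (p ++ g ++ q).
Proof.
move=> Ig Lpq; apply: Leps_step Lpq _; exists g => //.
apply/shuffleP; rewrite catA.
have := interleaving_cat (interleaving_catl p g) (interleaving_catl q [::]).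
by rewrite !cats0.
Qed.

Section Factorization.

Variable m : nat.

Definition weight (n : nat) (w : word) : nat :=
  m * occ lb (take n w) + occ la (drop n w).

Lemma weight_interleaving z u w n : interleaving z u w ->
  exists nz nu, weight n w = weight nz z + weight nu u.
Proof.
move=> H; have [nz [nu [Ht Hd]]] := interleaving_cut n H.
exists nz, nu; rewrite /weight /occ (count_interleaving _ Ht).
by rewrite (count_interleaving _ Hd); lia.
Qed.

Lemma weight_ba n : m <= weight n (ba m).
Proof. by case: n => [|n]; rewrite /weight /occ /= ?count_nseq /=; lia. Qed.

Lemma shuffles_ba_weight x w n :
  shuffles (nseq x (ba m)) w -> x * m <= weight n w.
Proof.
elim: x w n => [|x IH] w n; first by [].
rewrite -addn1 nseqD cats1 shuffles_rcons => -[z [Hz /shuffleP Hs]].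
have [nz [nu ->]] := weight_interleaving n Hs.
by rewrite mulnDl mul1n leq_add ?IH ?weight_ba.
Qed.

Lemma shuffles_ba_cat_weight x w' w n :
  shuffles (nseq x (ba m) ++ [:: w']) w -> x * m <= weight n w.
Proof.
rewrite cats1 shuffles_rcons => -[z [Hz /shuffleP Hs]].
have [nz [nu ->]] := weight_interleaving n Hs.
exact: leq_trans (shuffles_ba_weight nz Hz) (leq_addr _ _).
Qed.

(* The number of a's still owed to the b's read so far, an a with nothing
   owed being a free generator. *)
Fixpoint debt (d : nat) (w : word) : nat :=
  if w is c :: w' then debt (if c then d.-1 else d + m) w' else d.

Lemma debt_cat d u v : debt d (u ++ v) = debt (debt d u) v.
Proof. by elim: u d => //= c u IH d. Qed.

Lemma Leps_cat_debt w : Leps [:: ba m; [:: la]] (w ++ nseq (debt 0 w) la).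
Proof.
have ba_in : ba m \in [:: ba m; [:: la]] by rewrite inE eqxx.
have a_in : [:: la] \in [:: ba m; [:: la]] by rewrite !inE eqxx orbT.
elim/last_ind: w => [|w c IH]; first exact: Leps_nil.
rewrite -cats1 debt_cat; case: c => /=.
  case: (debt 0 w) IH => [|d] IH; last by rewrite -catA.
  by rewrite cats0; apply: Leps_insert a_in IH.
by rewrite -catA /= addnC nseqD; apply: Leps_insert ba_in IH.
Qed.

Lemma Leps_debt0 w : debt 0 w = 0 -> Leps [:: ba m; [:: la]] w.
Proof. by move=> w0; have := Leps_cat_debt w; rewrite w0 cats0. Qed.

(* Starting with s credits, each b adds m credits and each a spends one;
   [solvent] says the credit never runs out, [balance] is the final credit. *)
Fixpoint solvent (s : nat) (w : word) : bool :=
  if w is c :: w' then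
    if c then (0 < s) && solvent s.-1 w' else solvent (s + m) w'
  else true.

Fixpoint balance (s : nat) (w : word) : nat :=
  if w is c :: w' then balance (if c then s.-1 else s + m) w' else s.

Lemma solvent_cat s u v :
  solvent s (u ++ v) = solvent s u && solvent (balance s u) v.
Proof. by elim: u s => //= -[] u IH s; rewrite IH ?andbA. Qed.

Lemma debt_balance d s v :
  solvent s v -> debt d v + s <= maxn d s + balance s v.
Proof.
elim: v d s => [|[] v IH] d s /=; first lia.
  by case/andP=> s_gt0 /(IH d.-1); lia.
by move/(IH (d + m)); lia.
Qed.

Fixpoint rem_as (k : nat) (w : word) : word :=
  if w is c :: w' then
    if c && (0 < k) then rem_as k.-1 w' else c :: rem_as k w'
  else [::].

Lemma solvent_rem_as w s k : solvent (s + k) w -> solvent s (rem_as k w).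
Proof.
elim: w s k => [|[] w IH] s [|k] //=; rewrite ?addn0.
- by case/andP=> -> solv_w; apply: (IH _ 0); rewrite addn0.
- by rewrite addnS => /andP[_ /IH].
- by move=> solv_w; apply: (IH _ 0); rewrite addn0.
- by rewrite addnAC => /IH.
Qed.

Lemma interleaving_rem_as w k :
  k <= count_mem la w -> interleaving (rem_as k w) (nseq k la) w.
Proof.
elim: w k => [|[] w IH] [|k] //= le_kw; constructor; exact: IH.
Qed.

Lemma count_rem_as w k : count_mem la (rem_as k w) = count_mem la w - k.
Proof. by elim: w k => [|[] w IH] [|k] //=; rewrite IH ?subn0 ?subSS. Qed.

Lemma Leps_no_a w : count_mem la w = 0 -> Leps [:: ba m; [:: lb]] w.
Proof.
elim: w => [_|[] w IH] //=; first exact: Leps_nil.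
move=> /IH Lw; apply: (@Leps_insert _ [:: lb] [::] w) Lw.
by rewrite !inE eqxx orbT.
Qed.

Hypothesis m_gt0 : 0 < m.

(* A solvent word is a shuffle of its first b and its first m a's with a
   solvent word having m fewer a's. *)
Lemma Leps_solvent w :
  solvent 0 w -> m %| count_mem la w -> Leps [:: ba m; [:: lb]] w.
Proof.
have [n] := ubnP (count_mem la w); elim: n w => // n IH w lt_wn solv_w dvd_w.
have [|w_a] := posnP (count_mem la w); first exact: Leps_no_a.
case: w lt_wn solv_w dvd_w w_a => [|[] w] //=.
rewrite !add0n => lt_wn solv_w dvd_w w_a.
have le_mw : m <= count_mem la w by apply: dvdn_leq.
apply: Leps_step (IH (rem_as m w) _ _ _) _.
- by rewrite count_rem_as; move: (count_mem la w) lt_wn le_mw => c; lia.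
- exact: solvent_rem_as.
- by rewrite count_rem_as dvdn_sub.
exists (ba m); first by rewrite inE eqxx.
by apply/shuffleP; constructor; apply: interleaving_rem_as.
Qed.

Lemma greedy_factorization w : exists w1 w2 w3 : word,
  [/\ w = w1 ++ w2 ++ w3, debt 0 w1 = 0, solvent 0 (w2 ++ w3),
      m %| count_mem la w2 & count_mem la w3 < m].
Proof.
elim/last_ind: w => [|w c [w1 [w2 [w3 [-> debt_w1 solv_w23 dvd_w2 lt_w3]]]]].
  by exists [::], [::], [::].
rewrite -cats1; case: c; last first.
  exists w1, w2, (w3 ++ [:: lb]); split; rewrite ?catA //.
    by rewrite solvent_cat solv_w23.
  by rewrite count_cat addn0.
case solv_w23a: (solvent 0 ((w2 ++ w3) ++ [:: la])); last first.
  exists (w1 ++ w2 ++ w3 ++ [:: la]), [::], [::]; split; rewrite ?cats0 ?catA //.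
  have bal0 : balance 0 (w2 ++ w3) = 0.
    apply/eqP; move: solv_w23a.
    by rewrite solvent_cat solv_w23 /= andbT lt0n => /negbT; rewrite negbK.
  rewrite -!catA debt_cat debt_w1 catA debt_cat /=.
  by have := debt_balance 0 solv_w23; rewrite bal0 addn0 maxnn leqn0 => /eqP ->.
have [lt_w3a|] := ltnP (count_mem la w3).+1 m.
  exists w1, w2, (w3 ++ [:: la]); split; rewrite ?catA //.
  by rewrite count_cat addn1.
exists w1, (w2 ++ w3 ++ [:: la]), [::]; split; rewrite ?cats0 ?catA //.
have w3a_m : (count_mem la w3).+1 = m by apply/anti_leq/andP.
by rewrite !count_cat /= -addnA addn1 w3a_m dvdn_add ?dvdnn.
Qed.

Lemma factorization_bound x w' w1 w2 w3 :
  m %| count_mem la w2 -> count_mem la w3 < m ->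
  shuffles (nseq x (ba m) ++ [:: w']) (w1 ++ w2 ++ w3) ->
  x <= occ lb w1 + count_mem la w2 %/ m.
Proof.
move=> /dvdnP[k w2_km] lt_w3 /(shuffles_ba_cat_weight (size w1)).
rewrite /weight take_size_cat // drop_size_cat // /occ count_cat w2_km mulnK //.
move=> le_xm; rewrite -ltnS -(ltn_pmul2r m_gt0).
by move: (count_mem lb w1) (count_mem la w3) le_xm lt_w3 => b c; nia.
Qed.

End Factorization.

Theorem lemma14 (m : nat) (hm : (1 <= m)%N) (w : word) :
  exists w1 w2 w3 : word,
    [/\ w = w1 ++ w2 ++ w3,
        Leps [:: ba m; [:: la]] w1,
        Leps [:: ba m; [:: lb]] w2,
        (occ la w3 < m)%N &
        forall (x : nat) (w' : word),
          shuffles (nseq x (ba m) ++ [:: w']) w ->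
          ((x%:R : rat) <= (occ lb w1)%:R + (occ la w2)%:R / m%:R)%R].
Proof.
have [w1 [w2 [w3 [-> debt_w1 solv_w23 dvd_w2 lt_w3]]]] :=
  greedy_factorization hm w.
have solv_w2 : solvent m 0 w2 by move: solv_w23; rewrite solvent_cat => /andP[].
exists w1, w2, w3; split => //.
- exact: Leps_debt0.
- exact: Leps_solvent.
move=> x w' /(factorization_bound hm dvd_w2 lt_w3) le_x.
by rewrite /occ -(divnK dvd_w2) natrM mulfK ?pnatr_eq0 -?lt0n // -natrD ler_nat.
Qed.
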